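(* Let $S_n$ be as defined in the context. For every $n\in\mathbb{N}$, $n\ge 1$, and every $w\in\{0,1\}^n$, $\mathrm{occ}_b(w,S_n)=1$; that is, $S_n$, split into consecutive blocks of length $n$, contains every binary string of length $n$ exactly once.
   Context: Strings are indexed from $0$; $x[i..j]$ is the substring from position $i$ to $j$; $x^j$ is $j$-fold concatenation. For a string $x$ and $w$ nonempty, $\mathrm{occ}_b(w,x)=|\{i: x[i..i+|w|-1]=w,\ i\equiv 0 \bmod |w|\}|$. de Bruijn strings: for $n\ge1$, a de Bruijn string of order $n$ is a binary string $x$ of length $2^n$ such that every $w\in\{0,1\}^n$ occurs exactly once as a substring of $x\cdot x[0..n-2]$. $db(n)$ is the lexicographically least one, produced by Martin's algorithm: start with $x=1^{n-1}$; while possible, append a bit (preferring $0$ over $1$) so that all length-$n$ substrings of $x$ remain distinct; then delete the prefix $1^{n-1}$. For $0\le i<2^n$, $db_i(n)=db(n)[i..2^n-1]\cdot db(n)[0..i-1]$. For $n\ge1$ write $n=2^st$ with $s\ge0$ and $t$ odd, let $B_{n,i}=db_i(n)^t$ for $0\le i<2^s$, and $S_n=B_{n,0}B_{n,1}\cdots B_{n,2^s-1}$. *)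

From mathcomp Require Import all_boot.
Set Implicit Arguments. Unset Strict Implicit. Unset Printing Implicit Defensive.

(* Binary strings are [seq bool], with [false] = 0 and [true] = 1, indexed from 0. *)

Definition substr (x : seq bool) (i m : nat) : seq bool := take m (drop i x).

Definition substrings (m : nat) (x : seq bool) : seq (seq bool) :=
  mkseq (fun i => substr x i m) (size x + 1 - m).

Definition occ_b (w x : seq bool) : nat :=
  count (fun i => (i %% size w == 0) && (substr x i (size w) == w)) (iota 0 (size x)).

Definition martin_step (n : nat) (x : seq bool) : option (seq bool) :=
  if uniq (substrings n (rcons x false)) then Some (rcons x false)
  else if uniq (substrings n (rcons x true)) then Some (rcons x true)
  else None.

(* iterate while possible; the fuel bounds the number of steps (each step adds a new
   distinct length-n substring, so at most 2^n steps are ever possible) *)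
Fixpoint martin_loop (n fuel : nat) (x : seq bool) : seq bool :=
  match fuel with
  | 0 => x
  | f.+1 => match martin_step n x with
            | Some y => martin_loop n f y
            | None => x
            end
  end.

Definition db (n : nat) : seq bool :=
  drop n.-1 (martin_loop n (2 ^ n).+1 (nseq n.-1 true)).

Definition db_rot (n i : nat) : seq bool := rot i (db n).

Definition s_of (n : nat) : nat := logn 2 n.
Definition t_of (n : nat) : nat := n %/ 2 ^ s_of n.

Definition B (n i : nat) : seq bool := flatten (nseq (t_of n) (db_rot n i)).

Definition S (n : nat) : seq bool := flatten [seq B n i | i <- iota 0 (2 ^ s_of n)].

From mathcomp Require Import all_boot zify.
Set Implicit Arguments. Unset Strict Implicit. Unset Printing Implicit Defensive.

(* Martin's algorithm keeps the length-n windows of the word it builds distinct and appends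
   a 1 only when a 0 would repeat a window, so a window v1 never occurs without v0.  When it
   stops, both extensions of its last n-1 letters u are windows.  Counting the occurrences of a
   word v of length n-1 once as prefixes and once as suffixes of windows, u has out-degree 2 and
   in-degree at most 2, so u is also the initial word 1^(n-1); then in- and out-degrees agree
   everywhere, and an induction on z (using the greedy rule) shows that every z 1^j b of length n
   is a window.  So all 2^n words are windows and db(n) is a cyclic de Bruijn word.
   With n = 2^s t and 2^n = 2^s M, the block number k = a M + b of S_n lies inside
   B_{n,a} = db_a(n)^t at offset b n (as t 2^n = n M), so it is the cyclic window of db(n) at
   a + b n.  Since t is odd, k |-> a + b n is onto modulo 2^n, so the 2^n blocks are all the
   words of length n. *)

Lemma eq_in_mkseq (T : Type) (f g : nat -> T) n :
  (forall r, r < n -> f r = g r) -> mkseq f n = mkseq g n.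
Proof. by move=> fg; apply/eq_in_map => r; rewrite mem_iota => /andP[_ /fg]. Qed.

Lemma count_uniq_pred2 (T : eqType) (p : pred T) a b (s : seq T) :
  uniq s -> a != b -> {in s, forall x, p x = (x == a) || (x == b)} ->
  count p s = (a \in s) + (b \in s).
Proof.
move=> s_uniq neq_ab p_ab; rewrite -!count_uniq_mem // -count_predUI.
have -> : count (predI (pred1 a) (pred1 b)) s = 0.
  rewrite (@eq_count _ _ pred0) ?count_pred0 // => x /=.
  by case: (x =P a) => // ->; apply: negbTE.
by rewrite addn0; apply: eq_in_count.
Qed.

Lemma count_multiples (P : pred nat) n K : 0 < n ->
  count (fun i => (i %% n == 0) && P i) (iota 0 (K * n)) = count (fun k => P (k * n)) (iota 0 K).
Proof.
case: n => // n _; elim: K => // K IH.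
rewrite mulSnr iotaD count_cat IH add0n -[K.+1]addn1 iotaD count_cat /= addn0.
congr addn; rewrite modnMl eqxx -[RHS]addn0; congr addn.
rewrite (eq_in_count (a2 := pred0)) ?count_pred0 // => i; rewrite mem_iota => /andP[lo hi].
have -> : i = K * n.+1 + (i - K * n.+1) by lia.
by rewrite modnMDl modn_small /=; lia.
Qed.

Lemma size_flatten_uniform (T : Type) L (ss : seq (seq T)) :
  all (fun s => size s == L) ss -> size (flatten ss) = size ss * L.
Proof.
by elim: ss => //= s ss IH /andP[/eqP s_size ss_size]; rewrite size_cat s_size IH.
Qed.

Lemma nth_flatten_uniform (T : Type) (x0 : T) L ss i r :
  all (fun s => size s == L) ss -> r < L ->
  nth x0 (flatten ss) (i * L + r) = nth x0 (nth [::] ss i) r.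
Proof.
move=> + r_lt; elim: ss i => [|s ss IH] i; first by rewrite !nth_nil.
case/andP=> /eqP s_size ss_size; rewrite /= nth_cat s_size.
case: i => [|i]; first by rewrite r_lt.
by rewrite mulSn -addnA ltnNge leq_addr /= addKn IH.
Qed.

Lemma nth_rot (T : Type) (x0 : T) i (s : seq T) r : i <= size s -> r < size s ->
  nth x0 (rot i s) r = nth x0 s ((i + r) %% size s).
Proof.
move=> i_le r_lt; rewrite nth_cat size_drop.
case: ltnP => [r_lt'|r_ge]; first by rewrite nth_drop modn_small //; lia.
rewrite nth_take; last lia.
have -> : i + r = (r - (size s - i)) + size s by lia.
by rewrite modnDr modn_small //; lia.
Qed.

Lemma substr_mkseq x i m : i + m <= size x ->
  substr x i m = mkseq (fun r => nth false x (i + r)) m.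
Proof.
move=> hx; have sub_size : size (substr x i m) = m by rewrite size_takel // size_drop; lia.
apply: (@eq_from_nth _ false) => [|r]; rewrite sub_size ?size_mkseq // => r_lt.
by rewrite nth_take // nth_drop nth_mkseq.
Qed.

Definition bwords (k : nat) : seq (seq bool) := map val (enum {: k.-tuple bool}).

Lemma mem_bwords k w : (w \in bwords k) = (size w == k).
Proof.
apply/mapP/eqP => [[u _ ->]|hw]; first exact: size_tuple.
by exists (Tuple (introT eqP hw)); rewrite ?mem_enum.
Qed.

Lemma uniq_bwords k : uniq (bwords k).
Proof. by rewrite map_inj_uniq ?enum_uniq //; apply: val_inj. Qed.

Lemma size_bwords k : size (bwords k) = 2 ^ k.
Proof. by rewrite size_map -cardE card_tuple card_bool. Qed.

Lemma size_uniq_words k (ws : seq (seq bool)) :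
  uniq ws -> {in ws, forall w, size w = k} -> size ws <= 2 ^ k.
Proof.
move=> ws_uniq ws_size; rewrite -(size_bwords k) uniq_leq_size // => w w_ws.
by rewrite mem_bwords ws_size.
Qed.

Lemma count_mem_covering ws w :
  {subset bwords (size w) <= ws} -> size ws = 2 ^ size w -> count_mem w ws = 1.
Proof.
move=> covering ws_size; rewrite count_uniq_mem ?covering ?mem_bwords //.
by apply: leq_size_uniq (uniq_bwords _) covering _; rewrite size_bwords ws_size.
Qed.

Lemma size_mem_substrings m x w : w \in substrings m x -> size w = m.
Proof.
case/mapP=> i; rewrite mem_iota add0n => /andP[_ hi] ->.
by rewrite size_takel // size_drop; move: (size x) hi; lia.
Qed.

Section Windows.
Variable m : nat.
Implicit Types x v w : seq bool.

Lemma substringsS x : substrings m.+1 x = mkseq (fun j => substr x j m.+1) (size x - m).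
Proof. by rewrite /substrings addn1 subSS. Qed.

Lemma substrings_rcons x b : m <= size x ->
  substrings m.+1 (rcons x b) = rcons (substrings m.+1 x) (rcons (drop (size x - m) x) b).
Proof.
move=> hm; rewrite !substringsS size_rcons subSn // mkseqS; congr rcons.
  apply/eq_in_map => j; rewrite mem_iota => /andP[_ hj].
  have {}hj : j + m < size x by move: (size x) hj; lia.
  by rewrite /substr drop_rcons -?cats1 ?takel_cat // ?size_drop; lia.
rewrite /substr drop_rcons; last lia.
by rewrite take_oversize // size_rcons size_drop; lia.
Qed.

(* Both sides count the occurrences of [v] in [x]. *)
Lemma substrings_balance x v : m <= size x ->
  count (fun w => take m w == v) (substrings m.+1 x) + (drop (size x - m) x == v) =
  (take m x == v) + count (fun w => behead w == v) (substrings m.+1 x).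
Proof.
move=> hm; rewrite substringsS !count_map.
pose occ j := substr x j m == v.
have out_occ : count (preim (substr x ^~ m.+1) (fun w => take m w == v)) (iota 0 (size x - m))
    = count occ (iota 0 (size x - m)).
  by apply: eq_count => j; rewrite /= /occ /substr take_takel.
have in_occ : count (preim (substr x ^~ m.+1) (fun w => behead w == v)) (iota 0 (size x - m))
    = count occ (iota 1 (size x - m)).
  rewrite (iotaDl 1 0) count_map; apply: eq_count => j.
  by rewrite /= /occ /substr -[1 + j]/j.+1 -[j.+1]add1n -drop_drop drop1; case: (drop j x).
have last_occ : (drop (size x - m) x == v) = occ (size x - m).
  by rewrite /occ /substr take_oversize // size_drop; lia.
have first_occ : (take m x == v) = occ 0 by rewrite /occ /substr drop0.
rewrite out_occ in_occ last_occ first_occ.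
transitivity (count occ (iota 0 (size x - m).+1)); last by [].
by rewrite -addn1 iotaD count_cat /= addn0.
Qed.

End Windows.

Section WordCounts.
Variables (m : nat) (W : seq (seq bool)).
Hypotheses (W_uniq : uniq W) (W_size : {in W, forall w, size w = m.+1}).

Lemma count_take_words v : size v = m ->
  count (fun w => take m w == v) W = (rcons v false \in W) + (rcons v true \in W).
Proof.
move=> hv; apply: count_uniq_pred2 => [//||w /W_size]; first by rewrite eqseq_rcons andbF.
case/lastP: w => [//|w c]; rewrite size_rcons => -[hw].
by rewrite !eqseq_rcons -cats1 take_size_cat //; case: c; rewrite ?andbT ?andbF ?orbF.
Qed.

Lemma count_behead_words v : size v = m ->
  count (fun w => behead w == v) W = (false :: v \in W) + (true :: v \in W).
Proof.
move=> hv; apply: count_uniq_pred2 => [//|//|w /W_size].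
by case: w => [//|c w] _; rewrite !eqseq_cons; case: c; rewrite ?andbT ?andbF ?orbF.
Qed.

End WordCounts.

Section Martin.
Variable m : nat.
Local Notation windows := (substrings m.+1).

Definition martin_inv (x : seq bool) : Prop :=
  [/\ prefix (nseq m true) x, uniq (windows x)
    & forall v, rcons v true \in windows x -> rcons v false \in windows x].

Lemma martin_inv_init : martin_inv (nseq m true).
Proof. by split; rewrite ?prefix_refl // substringsS size_nseq subnn. Qed.

Lemma martin_inv_size x : martin_inv x -> m <= size x.
Proof. by case=> /size_prefix; rewrite size_nseq. Qed.

Lemma martin_inv_rcons x b : martin_inv x -> uniq (windows (rcons x b)) ->
  (b -> rcons (drop (size x - m) x) false \in windows x) -> martin_inv (rcons x b).
Proof.
move=> x_inv uniq_xb b_greedy; have hm := martin_inv_size x_inv.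
case: x_inv => x_pre _ x_greedy; split=> // [|v].
  exact: prefix_trans x_pre (prefix_rcons x b).
rewrite substrings_rcons // !mem_rcons !inE !eqseq_rcons.
case/orP=> [/andP[/eqP-> /eqP b_true]|/x_greedy->]; last by rewrite orbT.
by rewrite b_greedy ?orbT -?b_true.
Qed.

Lemma martin_step_inv x y : martin_inv x -> martin_step m.+1 x = Some y ->
  martin_inv y /\ size y = (size x).+1.
Proof.
move=> x_inv; have hm := martin_inv_size x_inv; rewrite /martin_step.
case: ifP => [uniq0 [<-]|not_uniq0].
  by rewrite size_rcons; split=> //; apply: martin_inv_rcons.
case: ifP => // uniq1 [<-]; rewrite size_rcons; split=> //; apply: martin_inv_rcons => // _.
case: x_inv => _ x_uniq _; move: not_uniq0; rewrite substrings_rcons // rcons_uniq x_uniq andbT.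
by move/negbFE.
Qed.

Lemma martin_loop_inv f x : martin_inv x ->
  let y := martin_loop m.+1 f x in
  martin_inv y /\ (martin_step m.+1 y = None \/ size y = size x + f).
Proof.
elim: f x => [|f IH] x x_inv /=; first by rewrite addn0; split; last right.
case E: (martin_step m.+1 x) => [y|]; last by split; last left.
have [y_inv y_size] := martin_step_inv x_inv E.
by rewrite -addSnnS -y_size; apply: IH.
Qed.

Definition martin_seq := martin_loop m.+1 (2 ^ m.+1).+1 (nseq m true).

(* A run using all of its fuel would have 2^n + 1 distinct windows of length n. *)
Lemma martin_seq_stuck : martin_inv martin_seq /\ martin_step m.+1 martin_seq = None.
Proof.
have [y_inv [//|y_size]] := martin_loop_inv (2 ^ m.+1).+1 martin_inv_init.
case: (y_inv) => _ y_uniq _.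
have := size_uniq_words y_uniq (@size_mem_substrings _ _).
by rewrite substringsS size_mkseq -/martin_seq y_size size_nseq; lia.
Qed.

End Martin.

Section Stuck.
Variables (m : nat) (y : seq bool).
Hypotheses (y_inv : martin_inv m y) (y_stuck : martin_step m.+1 y = None).
Local Notation W := (substrings m.+1 y).
Local Notation u := (drop (size y - m) y).

Let y_size_ge : m <= size y. Proof. exact: martin_inv_size y_inv. Qed.
Let W_uniq : uniq W. Proof. by case: y_inv. Qed.
Let W_size : {in W, forall w, size w = m.+1}. Proof. exact: size_mem_substrings. Qed.
Let u_size : size u = m. Proof. by rewrite size_drop; lia. Qed.

Lemma stuck_suffix_windows b : rcons u b \in W.
Proof.
move: y_stuck; rewrite /martin_step !substrings_rcons // !rcons_uniq W_uniq !andbT.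
by case: b; do 2!case: (_ \in W).
Qed.

Lemma stuck_balance v : size v = m ->
  (rcons v false \in W) + (rcons v true \in W) + (u == v) =
  (nseq m true == v) + ((false :: v \in W) + (true :: v \in W)).
Proof.
move=> hv; case: y_inv => y_pre _ _; move: y_pre; rewrite prefixE size_nseq => /eqP <-.
rewrite -(count_take_words W_uniq W_size hv) -(count_behead_words W_uniq W_size hv).
exact: substrings_balance.
Qed.

Lemma stuck_suffix : u = nseq m true.
Proof.
have := stuck_balance u_size; rewrite !stuck_suffix_windows eqxx.
by case: eqP => // _; case: (_ \in W); case: (_ \in W).
Qed.

Lemma stuck_extend_left v c : size v = m ->
  rcons v false \in W -> rcons v true \in W -> c :: v \in W.
Proof.
move=> hv v0 v1; have := stuck_balance hv; rewrite v0 v1 stuck_suffix.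
by case: (_ == v); case: c; case: (_ \in W); case: (_ \in W).
Qed.

Lemma stuck_windows_ones_suffix z b : size z <= m ->
  rcons (z ++ nseq (m - size z) true) b \in W.
Proof.
elim: z b => [|c z IH] b hz; first by rewrite subn0 -stuck_suffix stuck_suffix_windows.
have ones_split : z ++ nseq (m - size z) true = rcons (z ++ nseq (m - size (c :: z)) true) true.
  by rewrite -cats1 -catA -[[:: true]]/(nseq 1 true) -nseqD addn1 subnSK.
have hz' : size z <= m := ltnW hz.
have true_window : rcons (c :: z ++ nseq (m - size (c :: z)) true) true \in W.
  rewrite rcons_cons -ones_split; apply: stuck_extend_left; rewrite ?IH //.
  by rewrite size_cat size_nseq; lia.
by case: b => //; case: y_inv => _ _ greedy; apply: greedy.
Qed.

Lemma stuck_windows_complete w : size w = m.+1 -> w \in W.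
Proof.
case/lastP: w => [//|v b]; rewrite size_rcons => -[hv].
by have := stuck_windows_ones_suffix b (eq_leq hv); rewrite hv subnn cats0.
Qed.

Lemma stuck_size : size y = m + 2 ^ m.+1.
Proof.
suff <- : size W = 2 ^ m.+1 by rewrite substringsS size_mkseq; lia.
apply/eqP; rewrite eqn_leq size_uniq_words //= -(size_bwords m.+1).
by apply: uniq_leq_size (uniq_bwords _) _ => w; rewrite mem_bwords => /eqP /stuck_windows_complete.
Qed.

End Stuck.

Definition cwindow (x : seq bool) (n p : nat) : seq bool :=
  mkseq (fun r => nth false x ((p + r) %% size x)) n.

Lemma cwindow_mod x n p : cwindow x n (p %% size x) = cwindow x n p.
Proof. by apply: eq_mkseq => r; rewrite modnDml. Qed.

Section DeBruijn.
Variable m : nat.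
Local Notation N := (2 ^ m.+1).
Local Notation y := (martin_seq m).

Let y_stuck := martin_seq_stuck m.
Let y_size : size y = m + N. Proof. exact: stuck_size y_stuck.1 y_stuck.2. Qed.
Let m_lt_N : m < N. Proof. exact: ltn_trans (ltnSn m) (ltn_expl _ (ltnSn 1)). Qed.

Lemma size_db : size (db m.+1) = N.
Proof. by rewrite size_drop y_size addKn. Qed.

Lemma nth_martin_seq p : p < m + N ->
  nth false y p = nth false (db m.+1) ((p + N - m) %% N).
Proof.
move=> hp; rewrite -[db m.+1]/(drop m y) nth_drop.
case: (ltnP p m) => [p_lt_m|p_ge_m]; last first.
  have -> : p + N - m = (p - m) + N by lia.
  by rewrite modnDr modn_small; [congr nth; lia | lia].
have y_prefix : nth false y p = true.
  have [[y_pre _ _] _] := y_stuck; move: y_pre; rewrite prefixE size_nseq => /eqP.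
  by move/(congr1 (nth false ^~ p)); rewrite nth_take // nth_nseq p_lt_m.
have y_suffix : nth false y (N + p) = true.
  have := stuck_suffix y_stuck.1 y_stuck.2; rewrite y_size addKn.
  by move/(congr1 (nth false ^~ p)); rewrite nth_drop nth_nseq p_lt_m.
by rewrite modn_small ?y_prefix -?y_suffix; [congr nth | ]; lia.
Qed.

Lemma db_complete w : size w = m.+1 -> exists p, w = cwindow (db m.+1) m.+1 p.
Proof.
move=> hw; have := stuck_windows_complete y_stuck.1 y_stuck.2 hw.
rewrite substringsS y_size addKn => /mapP[j]; rewrite mem_iota => /andP[_ hj] ->.
exists (j + N - m); rewrite substr_mkseq; last lia.
by apply: eq_in_mkseq => r hr; rewrite nth_martin_seq ?size_db; [congr nth; congr modn | ]; lia.
Qed.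

End DeBruijn.

Lemma interleave_onto A M t p : 0 < A -> 0 < M -> 0 < t -> coprime t M ->
  exists2 k, k < A * M & k %/ M + k %% M * (t * A) = p %[mod A * M].
Proof.
move=> A_gt0 M_gt0 t_gt0 tM.
pose a := p %% A; pose c := p %% (A * M) %/ A.
have p_eq : p %% (A * M) = c * A + a.
  by rewrite /a /c -(modn_dvdm p (dvdn_mulr M (dvdnn A))); apply: divn_eq.
have c_lt : c < M by rewrite /c ltn_divLR // [M * A]mulnC ltn_mod muln_gt0 A_gt0.
have [u v uv _] := egcdnP M t_gt0; rewrite (eqP tM) in uv.
pose b := c * u %% M.
have bt : b * t = c %[mod M].
  by rewrite /b modnMml -mulnA uv mulnDr mulnA modnMDl muln1 modn_small.
have a_lt : a < A by rewrite ltn_mod.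
exists (a * M + b).
  apply: (@leq_trans (a.+1 * M)); first by rewrite mulSnr ltn_add2l ltn_mod.
  by rewrite leq_mul2r a_lt orbT.
have b_lt : b < M by rewrite ltn_mod.
rewrite divnMDl // divn_small // addn0 modnMDl (modn_small b_lt).
rewrite -modnDmr mulnA [A * M]mulnC -muln_modl bt (modn_small c_lt) addnC.
by rewrite [M * A]mulnC -p_eq modn_mod.
Qed.

Lemma t_of_mul n : t_of n * 2 ^ s_of n = n.
Proof. exact: divnK (pfactor_dvdnn 2 n). Qed.

Lemma coprime2_t_of n : 0 < n -> coprime 2 (t_of n).
Proof.
move=> n_gt0; have [t t_odd n_eq] := pfactor_coprime (isT : prime 2) n_gt0.
by rewrite /t_of /s_of {1}n_eq mulnK ?expn_gt0.
Qed.

Lemma s_of_leq n : s_of n <= n.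
Proof.
case: n => // n; rewrite -(leq_exp2l _ _ (ltnSn 1)).
exact: leq_trans (dvdn_leq _ (pfactor_dvdnn 2 _)) (ltnW (ltn_expl _ _)).
Qed.

Section Blocks.
Variable m : nat.
Local Notation n := m.+1.
Local Notation N := (2 ^ n).
Local Notation d := (db n).
Local Notation s := (s_of n).
Local Notation t := (t_of n).
Local Notation M := (2 ^ (n - s)).

Let N_eq : N = 2 ^ s * M. Proof. by rewrite -expnD subnKC ?s_of_leq. Qed.
Let block_len : t * N = n * M. Proof. by rewrite N_eq mulnA t_of_mul. Qed.

Lemma size_B i : size (B n i) = t * N.
Proof.
rewrite (@size_flatten_uniform _ N) ?size_nseq //.
by rewrite all_nseq /= size_rot size_db eqxx orbT.
Qed.

Lemma nth_B i q : i <= N -> q < t * N -> nth false (B n i) q = nth false d ((i + q) %% N).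
Proof.
move=> i_le q_lt; have N_gt0 : 0 < N by rewrite expn_gt0.
rewrite {1}(divn_eq q N) (@nth_flatten_uniform _ _ N) ?ltn_mod //; last first.
  by rewrite all_nseq /= size_rot size_db eqxx orbT.
rewrite nth_nseq ltn_divLR // q_lt nth_rot ?size_db ?ltn_mod //.
by rewrite modnDmr.
Qed.

Lemma size_S : size (S n) = N * n.
Proof.
rewrite (@size_flatten_uniform _ (t * N)) ?size_map ?size_iota; last first.
  by apply/allP=> _ /mapP[i _ ->]; rewrite size_B.
by rewrite block_len mulnCA -N_eq mulnC.
Qed.

Lemma nth_S a q : a < 2 ^ s -> q < t * N ->
  nth false (S n) (a * (t * N) + q) = nth false d ((a + q) %% N).
Proof.
move=> a_lt q_lt; rewrite nth_flatten_uniform //; last first.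
  by apply/allP=> _ /mapP[i _ ->]; rewrite size_B.
rewrite (nth_map 0) ?size_iota // nth_iota // nth_B //.
by rewrite (leq_trans (ltnW a_lt)) // N_eq leq_pmulr ?expn_gt0.
Qed.

Lemma substr_S_block k : k < N ->
  substr (S n) (k * n) n = cwindow d n (k %/ M + k %% M * n).
Proof.
move=> k_lt; have M_gt0 : 0 < M by rewrite expn_gt0.
have k_eq := divn_eq k M; set a := k %/ M in k_eq *; set b := k %% M in k_eq *.
have b_lt : b < M by rewrite ltn_mod.
have a_lt : a < 2 ^ s by rewrite ltn_divLR // -N_eq.
rewrite substr_mkseq; last by rewrite size_S -mulSnr leq_mul2r k_lt orbT.
apply: eq_in_mkseq => r r_lt; rewrite size_db.
have -> : k * n + r = a * (t * N) + (b * n + r) by rewrite block_len k_eq; lia.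
rewrite nth_S //; first by congr nth; congr modn; lia.
rewrite block_len; apply: (@leq_trans (b.+1 * n)); first by rewrite mulSnr; lia.
by rewrite mulnC leq_mul2l b_lt orbT.
Qed.

Lemma S_blocks_complete u : size u = n ->
  u \in [seq substr (S n) (k * n) n | k <- iota 0 N].
Proof.
move=> u_size; have [p ->] := db_complete u_size.
have t_gt0 : 0 < t by move: (t_of_mul n); case: (t_of n).
have tM : coprime t M by apply: coprimeXr; rewrite coprime_sym coprime2_t_of.
have [k k_lt k_p] := interleave_onto p (expn_gt0 2 s) (expn_gt0 2 _) t_gt0 tM.
apply/mapP; exists k; first by rewrite mem_iota N_eq.
rewrite substr_S_block ?N_eq // -[in LHS]cwindow_mod -[in RHS]cwindow_mod size_db N_eq.
by rewrite -k_p t_of_mul.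
Qed.

End Blocks.

Theorem lemma1 (n : nat) (w : seq bool) :
  0 < n -> size w = n -> occ_b w (S n) = 1.
Proof.
case: n => // m _ w_size.
rewrite /occ_b w_size size_S count_multiples // -(count_map _ (pred1 w)).
apply: count_mem_covering => [u|]; last by rewrite size_map size_iota w_size.
by rewrite mem_bwords w_size => /eqP /S_blocks_complete.
Qed.
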